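(* Let $f:\mathbb{R}\to\mathbb{R}$ be a concave function such that $f(0)=0$, $f$ is differentiable at $0$, $f'(0)\neq 0$, $\sup_x f(x)=M>0$, and $\operatorname{argsup}_x f(x)>0$. Let $\mathbb{P}$ and $\mathbb{Q}$ be probability distributions with support $\mathcal{X}$, and let $\mathbb{M}=\frac12\mathbb{P}+\frac12\mathbb{Q}$. Define $$\mathrm{D}^{Rp}_f(\mathbb{P},\mathbb{Q})=\sup_{C:\mathcal{X}\to\mathbb{R}} 2\,\mathbb{E}_{x\sim\mathbb{P},\,y\sim\mathbb{Q}}\big[f(C(x)-C(y))\big],$$ $$\mathrm{D}^{Ra}_f(\mathbb{P},\mathbb{Q})=\sup_{C:\mathcal{X}\to\mathbb{R}} \mathbb{E}_{x\sim\mathbb{P}}\Big[f\big(C(x)-\mathbb{E}_{y\sim\mathbb{Q}}C(y)\big)\Big]+\mathbb{E}_{y\sim\mathbb{Q}}\Big[f\big(\mathbb{E}_{x\sim\mathbb{P}}C(x)-C(y)\big)\Big],$$ $$\mathrm{D}^{Ralf}_f(\mathbb{P},\mathbb{Q})=\sup_{C:\mathcal{X}\to\mathbb{R}} 2\,\mathbb{E}_{x\sim\mathbb{P}}\Big[f\big(C(x)-\mathbb{E}_{y\sim\mathbb{Q}}C(y)\big)\Big],$$ $$\mathrm{D}^{Rc}_f(\mathbb{P},\mathbb{Q})=\sup_{C:\mathcal{X}\to\mathbb{R}} \mathbb{E}_{x\sim\mathbb{P}}\Big[f\big(C(x)-\mathbb{E}_{m\sim\mathbb{M}}C(m)\big)\Big]+\mathbb{E}_{y\sim\mathbb{Q}}\Big[f\big(\mathbb{E}_{m\sim\mathbb{M}}C(m)-C(y)\big)\Big].$$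 Then $\mathrm{D}^{Rp}_f$, $\mathrm{D}^{Ra}_f$, $\mathrm{D}^{Ralf}_f$ and $\mathrm{D}^{Rc}_f$ are divergences.
   Context: The suprema range over (measurable) critic functions $C:\mathcal{X}\to\mathbb{R}$ for which the expectations are defined. A function $D$ assigning a real number to each pair of probability distributions on a common support is a divergence if for all $\mathbb{P},\mathbb{Q}$: $D(\mathbb{P},\mathbb{Q})\ge 0$, and $D(\mathbb{P},\mathbb{Q})=0$ if and only if $\mathbb{P}=\mathbb{Q}$. The condition $\operatorname{argsup}_x f(x)>0$ means the supremum of $f$ is reached at some positive $x$ (or approached as $x\to+\infty$). *)

From HB Require Import structures.
From mathcomp Require Import all_boot all_order all_algebra.
From mathcomp Require Import all_classical all_reals all_analysis.
Set Implicit Arguments. Unset Strict Implicit. Unset Printing Implicit Defensive.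
Import Order.TTheory GRing.Theory Num.Theory.
Import numFieldNormedType.Exports.
Local Open Scope classical_set_scope.
Local Open Scope ring_scope.

Definition concave (R : realType) (f : R -> R) : Prop :=
  forall (x y t : R), 0 <= t <= 1 ->
    t * f x + (1 - t) * f y <= f (t * x + (1 - t) * y).

Definition mixture d (T : measurableType d) (R : realType)
  (P Q : probability T R) :=
  mscale ((2:R)^-1)%:nng (measure_add P Q).

Definition critic d (T : measurableType d) (R : realType) (C : T -> R) :=
  measurable_fun setT C.

Local Open Scope ereal_scope.

(* Mean of C under a measure, as a real number (C is assumed integrable). *)
Definition mean d (T : measurableType d) (R : realType)
  (mu : {measure set T -> \bar R}) (C : T -> R) : R :=
  fine (\int[mu]_x (C x)%:E).

Definition DRp d (T : measurableType d) (R : realType) (f : R -> R)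
  (P Q : probability T R) : \bar R :=
  ereal_sup [set v | exists C : T -> R, critic C /\
     v = 2%:E * \int[(P \x Q)%E]_z (f (C z.1 - C z.2))%:E].

Definition icritic d (T : measurableType d) (R : realType)
  (P Q : probability T R) (C : T -> R) :=
  critic C /\ P.-integrable setT (EFin \o C) /\ Q.-integrable setT (EFin \o C).

Definition DRa d (T : measurableType d) (R : realType) (f : R -> R)
  (P Q : probability T R) : \bar R :=
  ereal_sup [set v | exists C : T -> R, icritic P Q C /\
     v = \int[P]_x (f (C x - mean Q C))%:E
         + \int[Q]_y (f (mean P C - C y))%:E].

Definition DRalf d (T : measurableType d) (R : realType) (f : R -> R)
  (P Q : probability T R) : \bar R :=
  ereal_sup [set v | exists C : T -> R, icritic P Q C /\
     v = 2%:E * \int[P]_x (f (C x - mean Q C))%:E].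

Definition DRc d (T : measurableType d) (R : realType) (f : R -> R)
  (P Q : probability T R) : \bar R :=
  ereal_sup [set v | exists C : T -> R, icritic P Q C /\
     v = \int[P]_x (f (C x - mean (mixture P Q) C))%:E
         + \int[Q]_y (f (mean (mixture P Q) C - C y))%:E].

Definition is_divergence d (T : measurableType d) (R : realType)
  (D : probability T R -> probability T R -> \bar R) : Prop :=
  forall P Q : probability T R,
    0 <= D P Q /\
    (D P Q = 0 <-> (forall A, measurable A -> P A = Q A)).

(* The constant critic 0 has value 0 because f 0 = 0, so each divergence is
   nonnegative.  Concavity and f 0 = 0 give the tangent bound f u <= f'(0) u;
   for the three divergences with integrable critics it integrates to a
   multiple of E_P C - E_Q C, which vanishes when P = Q.  The critics of D^Rp
   need not be integrable: there one uses instead f u + f (-u) <= 0 and the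
   invariance of P x P under swapping coordinates.  Conversely, if
   P A <> Q A, the value at the critic t 1_A is a finite combination
   sum_i w_i f (c_i t) whose derivative at t = 0 is f'(0) times a nonzero
   multiple of P A - Q A, hence it is positive for some t. *)

From HB Require Import structures.
From mathcomp Require Import all_boot all_order all_algebra.
From mathcomp Require Import all_classical all_reals all_analysis.
From mathcomp Require Import measurable_realfun.
From mathcomp Require Import ring lra.
Import Order.TTheory GRing.Theory Num.Theory.
Import numFieldNormedType.Exports.
Set Implicit Arguments. Unset Strict Implicit. Unset Printing Implicit Defensive.

Local Open Scope classical_set_scope.
Local Open Scope ring_scope.

Section derivative_at_zero.
Variable R : realType.
Implicit Types (g : R -> R) (l : R).

Lemma is_derive0_exists_gt0 g l (e : R) : is_derive (0 : R) 1 g l -> g 0 = 0 ->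
  0 < l -> 0 < e -> exists t, 0 < t < e /\ 0 < g t.
Proof.
move=> [dg gl] g0 l0 e0.
have /(cvgr_gt _) : _ @ 0^' --> 'D_1 g 0 := dg.
rewrite gl => /(_ _ l0); rewrite near_withinE => /nbhs_norm0P[/= del del0 quot_gt0].
pose t := Num.min del e / 2.
have t0 : 0 < t by rewrite divr_gt0 // lt_min del0 e0.
have tmin : t < Num.min del e by rewrite ltr_pdivrMr // ltr_pMr ?ltr1n // lt_min del0 e0.
exists t; split; first by rewrite t0 (lt_le_trans tmin) // ge_min lexx orbT.
have := quot_gt0 t; rewrite /= gtr0_norm // (lt_le_trans tmin) ?ge_min ?lexx //.
move=> /(_ isT (lt0r_neq0 t0)).
rewrite g0 subr0 addr0 [t%:A]mulr1.
by rewrite -[_ *: _]/(t^-1 * g t) pmulr_rgt0 // invr_gt0.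
Qed.

Lemma is_derive_scale g c : derivable g 0 1 ->
  is_derive (0 : R) 1 (fun t => g (c * t)) (c * derive1 g 0).
Proof.
move=> dg; have dc : derivable ( *%R c) (0 : R) 1 by apply: ex_derive.
have dgc : derivable g (c * 0) 1 by rewrite mulr0.
apply: DeriveDef.
  by apply/derivable1_diffP/differentiable_comp; apply/derivable1_diffP.
rewrite -derive1E (derive1_comp dc dgc) mulr0 mulrC derive1E derive_val.
by rewrite [c%:A]mulr1.
Qed.

Lemma is_derive_sum_dilates g (s : seq (R * R)) : derivable g 0 1 ->
  is_derive (0 : R) 1 (fun t => \sum_(wc <- s) wc.1 * g (wc.2 * t))
    ((\sum_(wc <- s) wc.1 * wc.2) * derive1 g 0).
Proof.
move=> dg; elim: s => [|[w c] s IHs].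
  under eq_fun do rewrite big_nil.
  by rewrite big_nil mul0r; apply: is_derive_cst.
under eq_fun do rewrite big_cons.
rewrite big_cons /= mulrDl -mulrA.
have dV := is_deriveD (is_deriveZ w (is_derive_scale c dg)) IHs.
exact: dV.
Qed.

Lemma sum_dilates_exists_gt0 g (s : seq (R * R)) : g 0 = 0 -> derivable g 0 1 ->
  (\sum_(wc <- s) wc.1 * wc.2) * derive1 g 0 != 0 ->
  exists t, 0 < \sum_(wc <- s) wc.1 * g (wc.2 * t).
Proof.
move=> g0 dg.
have gt0_ex (r : seq (R * R)) : 0 < (\sum_(wc <- r) wc.1 * wc.2) * derive1 g 0 ->
    exists t, 0 < \sum_(wc <- r) wc.1 * g (wc.2 * t).
  move=> D0.
  have V0 : \sum_(wc <- r) wc.1 * g (wc.2 * 0) = 0.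
    by rewrite big1 // => wc _; rewrite mulr0 g0 mulr0.
  have [t [_ Vt]] := is_derive0_exists_gt0 (is_derive_sum_dilates r dg) V0 D0 ltr01.
  by exists t.
rewrite neq_lt => /orP[D0|]; last exact: gt0_ex.
(* negating every dilation factor flips the sign of the derivative *)
have [|t Vt] := gt0_ex [seq (wc.1, - wc.2) | wc <- s].
  rewrite big_map; under eq_bigr do rewrite /= mulrN.
  by rewrite sumrN mulNr oppr_gt0.
by exists (- t); move: Vt; rewrite big_map; under eq_bigr do rewrite /= mulNr -mulrN.
Qed.

End derivative_at_zero.

Section concave.
Variables (R : realType) (f : R -> R).
Hypothesis fc : concave f.

Lemma concave_superlevel_is_interval c : is_interval [set x | c < f x].
Proof.
move=> x y /= cx cy z /andP[xz zy].
have [->|zy'] := eqVneq z y; first by [].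
have yx0 : 0 < y - x by rewrite subr_gt0 (le_lt_trans xz) // lt_neqAle zy' zy.
pose t := (y - z) / (y - x).
have t0 : 0 <= t by apply: divr_ge0; [rewrite subr_ge0 | exact: ltW].
have t1 : t <= 1 by rewrite /t ler_pdivrMr // mul1r lerD2l lerN2.
have -> : z = t * x + (1 - t) * y by rewrite /t; field; rewrite gt_eqF.
apply: lt_le_trans (fc x y (introT andP (conj t0 t1))).
have [->|tpos] := eqVneq t 0; first by rewrite mul0r add0r subr0 mul1r.
have lt_cfx : t * c < t * f x by rewrite ltr_pM2l // lt_def tpos t0.
have le_cfy : (1 - t) * c <= (1 - t) * f y by rewrite ler_wpM2l ?subr_ge0 // ltW.
lra.
Qed.

Lemma concave_measurable : measurable_fun setT f.
Proof.
apply: (measurability _ (RGenOInfty.measurableE R)) => _ [_ [c ->]] <-.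
apply: measurableI => //; apply: is_interval_measurable.
have -> : f @^-1` `]c, +oo[%classic = [set x | c < f x].
  by apply/seteqP; split => x /=; rewrite in_itv /= andbT.
exact: concave_superlevel_is_interval.
Qed.

Lemma concave_le_tangent u : f 0 = 0 -> derivable f 0 1 ->
  f u <= derive1 f 0 * u.
Proof.
move=> f0 df; rewrite leNgt; apply/negP => fu.
have dg := is_deriveB (is_deriveZ (f u) (is_derive_id (0 : R) 1)) (is_derive_scale u df).
have g0 : ((f u) \*: id - (fun t => f (u * t))) 0 = 0.
  by rewrite !fctE /= mulr0 f0 scaler0 subr0.
have l0 : 0 < f u *: 1 - u * derive1 f 0.
  by rewrite [_ *: 1]mulr1 subr_gt0 mulrC.
have [t [/andP[t0 t1]]] := is_derive0_exists_gt0 dg g0 l0 ltr01.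
rewrite /= subr_gt0 ltNge => /negP; apply.
have := fc u 0 (t := t); rewrite f0 !mulr0 !addr0 mulrC [u * t]mulrC; apply.
by rewrite !ltW.
Qed.

End concave.

Section integral.
Context d (T : measurableType d) (R : realType).
Local Open Scope ereal_scope.

Lemma le_integral_measurable (mu : {measure set T -> \bar R}) (g h : T -> R) :
  measurable_fun setT g -> measurable_fun setT h -> (forall x, g x <= h x)%R ->
  \int[mu]_x (g x)%:E <= \int[mu]_x (h x)%:E.
Proof.
move=> /measurable_EFinP mg /measurable_EFinP mh gh.
rewrite integralE [leRHS]integralE leeB //; apply: ge0_le_integral => //;
  do ?[exact: measurable_funepos | exact: measurable_funeneg] => x _.
- by rewrite !funeposE /= -!EFin_max lee_fin le_max2.
- by rewrite !funenegE /= -!EFin_max lee_fin le_max2 // lerN2.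
Qed.

Lemma integral_affine (mu : probability T R) (C : T -> R) (al be : R) :
  mu.-integrable setT (EFin \o C) ->
  \int[mu]_x (al * C x + be)%:E = (al * mean mu C + be)%R%:E.
Proof.
move=> iC; under eq_integral do rewrite EFinD EFinM.
rewrite integralD //; last 2 first.
- exact: integrableZl.
- exact: finite_measure_integrable_cst.
rewrite integralZl // integral_cst // [X in be%:E * X]probability_setT mule1 /mean.
by rewrite EFinD EFinM fineK // integrable_fin_num.
Qed.

Lemma integral_le_affine (mu : probability T R) (g C : T -> R) (al be : R) :
  measurable_fun setT g -> mu.-integrable setT (EFin \o C) ->
  (forall x, g x <= al * C x + be)%R ->
  \int[mu]_x (g x)%:E <= (al * mean mu C + be)%R%:E.
Proof.
move=> mg iC gC; rewrite -integral_affine //.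
apply: le_integral_measurable => //.
apply: measurable_funD => //; apply: measurable_funM => //.
exact/measurable_EFinP/(measurable_int mu).
Qed.

Lemma mean_indic (mu : {measure set T -> \bar R}) (A : set T) :
  measurable A -> mean mu \1_A = fine (mu A).
Proof. by move=> mA; rewrite /mean integral_indic // setIT. Qed.

Lemma integral_comp_indic (mu : probability T R) (A : set T) (phi : R -> R) :
  measurable A -> \int[mu]_x (phi (\1_A x))%:E =
  (fine (mu A) * phi 1 + (1 - fine (mu A)) * phi 0)%R%:E.
Proof.
move=> mA.
have phiE x : phi (\1_A x) = ((phi 1 - phi 0) * \1_A x + phi 0)%R.
  by rewrite indicE; case: (x \in A); rewrite /= ?mulr1 ?mulr0 ?subrK ?add0r.
under eq_integral do rewrite phiE.
rewrite integral_affine ?mean_indic //; last exact: integrable_indic.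
by congr (_%:E); ring.
Qed.

Lemma mean_indicZ (mu : probability T R) (A : set T) (t : R) :
  measurable A -> mean mu (fun x => \1_A x * t)%R = (fine (mu A) * t)%R.
Proof.
move=> mA; rewrite /mean (integral_comp_indic _ (fun s => s * t)%R) //=.
by rewrite mul0r mulr0 addr0 mul1r.
Qed.

Lemma integral_mscale (k : {nonneg R}) (mu : {measure set T -> \bar R})
    (g : T -> \bar R) :
  mu.-integrable setT g ->
  \int[mscale k mu]_x g x = k%:num%:E * \int[mu]_x g x.
Proof.
move=> ig; have mg := measurable_int mu ig.
rewrite [LHS]integralE [in RHS]integralE.
rewrite !ge0_integral_mscale //=; [|exact: measurable_funeneg|exact: measurable_funepos].
by rewrite -muleBr // fin_num_adde_defl // fin_numN integrable_neg_fin_num.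
Qed.

Lemma integrable_measure_add (m1 m2 : {measure set T -> \bar R}) (g : T -> \bar R) :
  m1.-integrable setT g -> m2.-integrable setT g ->
  (measure_add m1 m2).-integrable setT g.
Proof.
move=> /integrableP[mg i1] /integrableP[_ i2]; apply/integrableP; split => //.
rewrite ge0_integral_measure_add //; first exact: lte_add_pinfty.
exact: measurableT_comp.
Qed.

Lemma mean_mixture (P Q : probability T R) (C : T -> R) :
  P.-integrable setT (EFin \o C) -> Q.-integrable setT (EFin \o C) ->
  mean (mixture P Q) C = ((mean P C + mean Q C) / 2)%R.
Proof.
move=> iP iQ; rewrite /mixture /mean integral_mscale; last first.
  exact: integrable_measure_add.
have fP : \int[P]_x (C x)%:E \is a fin_num := integrable_fin_num measurableT iP.
have fQ : \int[Q]_x (C x)%:E \is a fin_num := integrable_fin_num measurableT iQ.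
have fPQ : \int[P]_x (C x)%:E + \int[Q]_x (C x)%:E \is a fin_num.
  by rewrite fin_numD fP.
by rewrite integral_measure_add // fineM // fineD //= mulrC.
Qed.

Lemma integrable_indicZ (mu : probability T R) (A : set T) (t : R) :
  measurable A -> mu.-integrable setT (EFin \o (fun x => \1_A x * t)%R).
Proof.
move=> mA; have -> : EFin \o (fun x => \1_A x * t)%R = (fun x => t%:E * (\1_A x)%:E).
  by apply/funext => x /=; rewrite mulrC EFinM.
exact/integrableZl/integrable_indic.
Qed.

End integral.

Section product.
Context d (T : measurableType d) (R : realType).
Local Open Scope ereal_scope.

Lemma integrable_bounded d' (X : measurableType d')
    (mu : {finite_measure set X -> \bar R}) (h : X -> R) (K : R) :
  measurable_fun setT h -> (forall x, `|h x| <= K)%R ->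
  mu.-integrable setT (EFin \o h).
Proof.
move=> mh hK.
apply: (le_integrable measurableT _ _ (finite_measure_integrable_cst mu K measurableT)).
  exact/measurable_EFinP.
by move=> x _ /=; rewrite !lee_fin (le_trans (hK x)) // ler_norm.
Qed.

Lemma integral_prod_comp_indic (P Q : probability T R) (A : set T)
    (psi : R -> R -> R) :
  measurable A -> measurable_fun setT (fun u : R * R => psi u.1 u.2) ->
  \int[P \x Q]_z (psi (\1_A z.1) (\1_A z.2))%:E =
  (fine (P A) * (fine (Q A) * psi 1 1 + (1 - fine (Q A)) * psi 1 0) +
   (1 - fine (P A)) * (fine (Q A) * psi 0 1 + (1 - fine (Q A)) * psi 0 0))%R%:E.
Proof.
move=> mA mpsi.
have mF : measurable_fun setT
    ((fun u : R * R => psi u.1 u.2) \o (fun z : T * T => (\1_A z.1, \1_A z.2))).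
  apply: measurableT_comp mpsi _.
  by apply: measurable_fun_pair; apply: measurableT_comp => //; exact: measurable_indic.
pose K := (`|psi 1 1| + `|psi 1 0| + `|psi 0 1| + `|psi 0 0|)%R.
have psiK (z : T * T) : (`|psi (\1_A z.1) (\1_A z.2)| <= K)%R.
  rewrite /K !indicE; have := normr_ge0 (psi 1%R 1%R); have := normr_ge0 (psi 1%R 0%R).
  have := normr_ge0 (psi 0%R 1%R); have := normr_ge0 (psi 0%R 0%R).
  by case: (z.1 \in A); case: (z.2 \in A) => /=; lra.
have iF := integrable_bounded (P \x Q : probability _ R) mF psiK.
rewrite -(integral12_prod_meas1 iF) /fubini_F /=.
under eq_integral do rewrite (integral_comp_indic _ (psi _)) //.
by rewrite (integral_comp_indic _
  (fun s => fine (Q A) * psi s 1 + (1 - fine (Q A)) * psi s 0)%R).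
Qed.

Lemma integral_prod_swap (P Q : probability T R) :
  (forall A, measurable A -> P A = Q A) ->
  forall h : T * T -> \bar R, measurable_fun setT h -> (forall z, 0 <= h z) ->
  \int[P \x Q]_z h (z.2, z.1) = \int[P \x Q]_z h z.
Proof.
move=> PQ h mh h0.
rewrite fubini_tonelli1 //=; last first.
  exact: (measurableT_comp mh (measurable_fun_pair measurable_snd measurable_fst)).
rewrite [RHS]fubini_tonelli2 // /fubini_F /fubini_G /=.
rewrite (eq_measure_integral Q) => [|A mA _]; last exact: PQ.
apply: eq_integral => y _; apply: eq_measure_integral => A mA _.
exact/esym/PQ.
Qed.

End product.

Section invariant.
Context d (X : measurableType d) (R : realType).
Variables (mu : {measure set X -> \bar R}) (s : X -> X).
Local Open Scope ereal_scope.

Hypothesis ms : measurable_fun setT s.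
Hypothesis mu_s : forall h : X -> \bar R, measurable_fun setT h ->
  (forall x, 0 <= h x) -> \int[mu]_x h (s x) = \int[mu]_x h x.

Lemma integral_le0_of_invariant (g : X -> R) : measurable_fun setT g ->
  (forall x, g x + g (s x) <= 0)%R -> \int[mu]_x (g x)%:E <= 0.
Proof.
move=> /measurable_EFinP mg gs; rewrite integralE sube_le0.
set gp := (EFin \o g)^\+; set gn := (EFin \o g)^\-.
have mgp : measurable_fun setT gp by exact: measurable_funepos.
have mgn : measurable_fun setT gn by exact: measurable_funeneg.
have gp0 x : 0 <= gp x by exact: funepos_ge0.
have gn0 x : 0 <= gn x by exact: funeneg_ge0.
have : \int[mu]_x (gp x + gp (s x)) <= \int[mu]_x (gn x + gn (s x)).
  apply: ge0_le_integral => //; do ?[by move=> x _; exact: adde_ge0];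
    do ?[by apply: emeasurable_funD => //; exact: measurableT_comp].
  (* g + g \o s <= 0 pointwise forces g^+ + g^+ \o s <= g^- + g^- \o s *)
  move=> x _; rewrite /gp /gn !funeposE !funenegE /= -!EFin_max -!EFinD lee_fin.
  have := gs x; rewrite /Num.max /Order.max; do 4 case: ltP => ?; lra.
rewrite !ge0_integralD //; do ?[exact: measurableT_comp].
rewrite !mu_s // -!mule2n -!mule_natl lee_pmul2l //.
Qed.

End invariant.

Lemma is_divergence_intro d (T : measurableType d) (R : realType)
    (D : probability T R -> probability T R -> \bar R) :
  (forall P Q : probability T R, (0 <= D P Q)%E) ->
  (forall P Q : probability T R,
    (forall A, measurable A -> P A = Q A) -> (D P Q <= 0)%E) ->
  (forall (P Q : probability T R) (A : set T),
    measurable A -> fine (P A) != fine (Q A) -> (0 < D P Q)%E) ->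
  is_divergence D.
Proof.
move=> ge0 le0 gt0 P Q; split => //; split => [D0 A mA|PQ]; last first.
  by apply/le_anti; rewrite le0 ?ge0.
rewrite -(fineK (fin_num_measure P _ mA)) -(fineK (fin_num_measure Q _ mA)).
congr (_%:E); apply/eqP/negPn/negP => PQA.
by have := gt0 P Q A mA PQA; rewrite D0 ltxx.
Qed.

Section divergences.
Context d (T : measurableType d) (R : realType) (f : R -> R).
Hypotheses (fc : concave f) (f0 : f 0 = 0) (fd : derivable f 0 1).
Local Notation a := (derive1 f 0).
Local Open Scope ereal_scope.

Lemma icritic_cst (P Q : probability T R) (c : R) : icritic P Q (fun=> c).
Proof.
split; first exact: measurable_cst.
by split; exact: finite_measure_integrable_cst.
Qed.

Lemma icritic_indicZ (P Q : probability T R) (A : set T) (t : R) :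
  measurable A -> icritic P Q (fun x => \1_A x * t)%R.
Proof.
move=> mA; split; last by split; exact: integrable_indicZ.
by apply: measurable_funM => //; exact: measurable_indic.
Qed.

Lemma mean0 (mu : {measure set T -> \bar R}) : mean mu (fun=> 0%R) = 0%R.
Proof. by rewrite /mean integral0_eq. Qed.

Lemma eq_mean (P Q : {measure set T -> \bar R}) (C : T -> R) :
  (forall A, measurable A -> P A = Q A) -> mean P C = mean Q C.
Proof. by move=> PQ; rewrite /mean (eq_measure_integral Q) // => A mA _; exact: PQ. Qed.

Lemma integral_le_tangent_subr (mu : probability T R) (C : T -> R) (c : R) :
  mu.-integrable setT (EFin \o C) ->
  \int[mu]_x (f (C x - c))%:E <= (a * (mean mu C - c))%R%:E.
Proof.
move=> iC; have mC : measurable_fun setT C.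
  exact/measurable_EFinP/(measurable_int mu iC).
rewrite mulrBr -mulrN; apply: integral_le_affine => // [|x].
  exact: measurableT_comp (concave_measurable fc) (measurable_funB mC _).
by rewrite -mulrDr concave_le_tangent.
Qed.

Lemma integral_le_tangent_subl (mu : probability T R) (C : T -> R) (c : R) :
  mu.-integrable setT (EFin \o C) ->
  \int[mu]_x (f (c - C x))%:E <= (a * (c - mean mu C))%R%:E.
Proof.
move=> iC; have mC : measurable_fun setT C.
  exact/measurable_EFinP/(measurable_int mu iC).
rewrite mulrBr addrC -mulNr; apply: integral_le_affine => // [|x].
  exact: measurableT_comp (concave_measurable fc) (measurable_funB _ mC).
by rewrite mulNr -mulrN -mulrDr [(- _ + c)%R]addrC concave_le_tangent.
Qed.

Lemma DRp_ge0 (P Q : probability T R) : 0 <= DRp f P Q.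
Proof.
apply: ereal_sup_ubound; exists (fun=> 0%R); split; first exact: measurable_cst.
by rewrite subrr f0 integral0_eq ?mule0.
Qed.

Lemma DRa_ge0 (P Q : probability T R) : 0 <= DRa f P Q.
Proof.
apply: ereal_sup_ubound; exists (fun=> 0%R); split; first exact: icritic_cst.
by rewrite !mean0 subrr f0 !integral0_eq ?adde0.
Qed.

Lemma DRalf_ge0 (P Q : probability T R) : 0 <= DRalf f P Q.
Proof.
apply: ereal_sup_ubound; exists (fun=> 0%R); split; first exact: icritic_cst.
by rewrite mean0 subrr f0 integral0_eq ?mule0.
Qed.

Lemma DRc_ge0 (P Q : probability T R) : 0 <= DRc f P Q.
Proof.
apply: ereal_sup_ubound; exists (fun=> 0%R); split; first exact: icritic_cst.
by rewrite !mean0 subrr f0 !integral0_eq ?adde0.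
Qed.

Lemma DRp_le0 (P Q : probability T R) :
  (forall A, measurable A -> P A = Q A) -> DRp f P Q <= 0.
Proof.
move=> PQ; apply: ge_ereal_sup => _ [C [mC ->]]; apply: mule_ge0_le0 => //.
apply: (integral_le0_of_invariant (s := fun z => (z.2, z.1)) _ (integral_prod_swap PQ)).
- exact: measurable_fun_pair measurable_snd measurable_fst.
- apply: measurableT_comp (concave_measurable fc) _.
  by apply: measurable_funB; apply: measurableT_comp mC _.
- move=> z /=; have := concave_le_tangent fc (C z.1 - C z.2) f0 fd.
  have := concave_le_tangent fc (C z.2 - C z.1) f0 fd; lra.
Qed.

Lemma DRa_le0 (P Q : probability T R) :
  (forall A, measurable A -> P A = Q A) -> DRa f P Q <= 0.
Proof.
move=> PQ; apply: ge_ereal_sup => _ [C [[_ [iP iQ]] ->]].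
apply: le_trans (leeD (integral_le_tangent_subr _ iP) (integral_le_tangent_subl _ iQ)) _.
by rewrite (eq_mean C PQ) subrr mulr0 addr0.
Qed.

Lemma DRalf_le0 (P Q : probability T R) :
  (forall A, measurable A -> P A = Q A) -> DRalf f P Q <= 0.
Proof.
move=> PQ; apply: ge_ereal_sup => _ [C [[_ [iP _]] ->]].
apply: mule_ge0_le0 => //; apply: le_trans (integral_le_tangent_subr _ iP) _.
by rewrite (eq_mean C PQ) subrr mulr0.
Qed.

Lemma DRc_le0 (P Q : probability T R) :
  (forall A, measurable A -> P A = Q A) -> DRc f P Q <= 0.
Proof.
move=> PQ; apply: ge_ereal_sup => _ [C [[_ [iP iQ]] ->]].
apply: le_trans (leeD (integral_le_tangent_subr _ iP) (integral_le_tangent_subl _ iQ)) _.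
by rewrite -EFinD -mulrDr addrA subrK (eq_mean C PQ) subrr mulr0.
Qed.

Hypothesis fa : a != 0%R.

Lemma ereal_sup_gt0_of_sum_dilates (S : set (\bar R)) (s : seq (R * R)) :
  (\sum_(wc <- s) wc.1 * wc.2 != 0)%R ->
  (forall t, S (\sum_(wc <- s) wc.1 * f (wc.2 * t))%R%:E) -> 0 < ereal_sup S.
Proof.
move=> s0 St; have [t Vt] := sum_dilates_exists_gt0 f0 fd (mulf_neq0 s0 fa).
by apply: lt_le_trans (ereal_sup_ubound (St t)); rewrite lte_fin.
Qed.

Lemma DRa_gt0 (P Q : probability T R) (A : set T) :
  measurable A -> fine (P A) != fine (Q A) -> 0 < DRa f P Q.
Proof.
move=> mA; set p := fine (P A); set q := fine (Q A) => pq.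
apply: (ereal_sup_gt0_of_sum_dilates
  (s := [:: (p, 1 - q); (1 - p, 0 - q); (q, p - 1); (1 - q, p - 0)]%R)).
  rewrite !big_cons big_nil /= (_ : _ + _ = 2 * (p - q))%R; last by ring.
  by rewrite mulf_neq0 ?pnatr_eq0 ?subr_eq0.
move=> t; exists (fun x => \1_A x * t)%R; split; first exact: icritic_indicZ.
rewrite !mean_indicZ // -/p -/q.
under eq_integral do rewrite -mulrBl.
under [X in _ = _ + X]eq_integral do rewrite -mulrBl.
rewrite (integral_comp_indic _ (fun s => f ((s - q) * t))) //.
rewrite (integral_comp_indic _ (fun s => f ((p - s) * t))) // -/p -/q.
by rewrite -EFinD !big_cons big_nil /=; congr (_%:E); ring.
Qed.

Lemma DRalf_gt0 (P Q : probability T R) (A : set T) :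
  measurable A -> fine (P A) != fine (Q A) -> 0 < DRalf f P Q.
Proof.
move=> mA; set p := fine (P A); set q := fine (Q A) => pq.
apply: (ereal_sup_gt0_of_sum_dilates (s := [:: (2 * p, 1 - q); (2 * (1 - p), 0 - q)]%R)).
  rewrite !big_cons big_nil /= (_ : _ + _ = 2 * (p - q))%R; last by ring.
  by rewrite mulf_neq0 ?pnatr_eq0 ?subr_eq0.
move=> t; exists (fun x => \1_A x * t)%R; split; first exact: icritic_indicZ.
rewrite mean_indicZ // -/q; under eq_integral do rewrite -mulrBl.
rewrite (integral_comp_indic _ (fun s => f ((s - q) * t))) // -/p.
by rewrite -EFinM !big_cons big_nil /=; congr (_%:E); ring.
Qed.

Lemma DRc_gt0 (P Q : probability T R) (A : set T) :
  measurable A -> fine (P A) != fine (Q A) -> 0 < DRc f P Q.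
Proof.
move=> mA; set p := fine (P A); set q := fine (Q A) => pq; set m := ((p + q) / 2)%R.
apply: (ereal_sup_gt0_of_sum_dilates
  (s := [:: (p, 1 - m); (1 - p, 0 - m); (q, m - 1); (1 - q, m - 0)]%R)).
  rewrite !big_cons big_nil /= (_ : _ + _ = p - q)%R; last by rewrite /m; field.
  by rewrite subr_eq0.
move=> t; exists (fun x => \1_A x * t)%R; split; first exact: icritic_indicZ.
rewrite mean_mixture ?integrable_indicZ // !mean_indicZ // -/p -/q.
rewrite (_ : (p * t + q * t) / 2 = m * t)%R; last by rewrite /m; field.
under eq_integral do rewrite -mulrBl.
under [X in _ = _ + X]eq_integral do rewrite -mulrBl.
rewrite (integral_comp_indic _ (fun s => f ((s - m) * t))) //.
rewrite (integral_comp_indic _ (fun s => f ((m - s) * t))) // -/p -/q.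
by rewrite -EFinD !big_cons big_nil /=; congr (_%:E); ring.
Qed.

Lemma DRp_gt0 (P Q : probability T R) (A : set T) :
  measurable A -> fine (P A) != fine (Q A) -> 0 < DRp f P Q.
Proof.
move=> mA; set p := fine (P A); set q := fine (Q A) => pq.
apply: (ereal_sup_gt0_of_sum_dilates
  (s := [:: (2 * (p * q), 1 - 1); (2 * (p * (1 - q)), 1 - 0);
            (2 * ((1 - p) * q), 0 - 1); (2 * ((1 - p) * (1 - q)), 0 - 0)]%R)).
  rewrite !big_cons big_nil /= (_ : _ + _ = 2 * (p - q))%R; last by ring.
  by rewrite mulf_neq0 ?pnatr_eq0 ?subr_eq0.
move=> t; exists (fun x => \1_A x * t)%R; split.
  by apply: measurable_funM => //; exact: measurable_indic.
have mpsi : measurable_fun setT (fun u : R * R => f ((u.1 - u.2) * t)%R).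
  apply: measurableT_comp (concave_measurable fc) _.
  by apply: measurable_funM => //; exact: measurable_funB.
under eq_integral do rewrite -mulrBl.
rewrite (integral_prod_comp_indic P Q (psi := fun u v => f ((u - v) * t))) //.
by rewrite -/p -/q -EFinM !big_cons big_nil /=; congr (_%:E); ring.
Qed.

End divergences.

Theorem theorem3p1 (R : realType) (f : R -> R) (M : R)
  (d : measure_display) (T : measurableType d) :
  concave f ->
  f 0 = 0 ->
  derivable f 0 1 ->
  derive1 f 0 != 0 ->
  ereal_sup (range (fun x => (f x)%:E)) = M%:E ->
  0 < M ->
  ((exists x, 0 < x /\ f x = M) \/ (f x @[x --> +oo] --> M)) ->
  is_divergence (@DRp d T R f) /\ is_divergence (@DRa d T R f) /\
  is_divergence (@DRalf d T R f) /\ is_divergence (@DRc d T R f).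
Proof.
(* Only concavity, f 0 = 0 and f'(0) <> 0 are used. *)
move=> fc f0 fd fa _ _ _.
split; [|split; [|split]]; apply: is_divergence_intro.
- exact: DRp_ge0 f0.
- exact: DRp_le0 fc f0 fd.
- exact: DRp_gt0 fc f0 fd fa.
- exact: DRa_ge0 f0.
- exact: DRa_le0 fc f0 fd.
- exact: DRa_gt0 f0 fd fa.
- exact: DRalf_ge0 f0.
- exact: DRalf_le0 fc f0 fd.
- exact: DRalf_gt0 f0 fd fa.
- exact: DRc_ge0 f0.
- exact: DRc_le0 fc f0 fd.
- exact: DRc_gt0 f0 fd fa.
Qed.
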